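(* Let $\mathcal{B}\models Th(\mathbb{N})$ be nonstandard and fix a nonstandard $\Delta\in B$. Let $\mathcal{A}$ be the substructure of $\mathcal{B}$ with universe $$A=\{Q+z : z\in\mathbb{Z},\ Q\in B,\ Q+z\in B,\ \text{and } n\mid Q \text{ and } 2^{n\Delta}\mid Q \text{ for all standard } 0<n\in\mathbb{N}\}.$$ Then $\mathcal{A}$ satisfies Presburger arithmetic.
   Context: $Th(\mathbb{N})$ is the complete theory of $\langle\mathbb{N},0,1,+,\cdot,\le\rangle$; $2^{n\Delta}$ is computed with the exponential definable in $\mathcal{B}$. Presburger arithmetic here means the axioms: $0\neq z+1$; $x\ne0\to\exists z\,(x=z+1)$; $x+z=y+z\to x=y$; $x+0=x$; associativity and commutativity of $+$; $x\le y\leftrightarrow\exists z\,(x+z=y)$; and for each standard $0<n$, $\exists y\,(ny\le x<n(y+1))$. *)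

From Stdlib Require Import Arith PeanoNat.

Inductive term : Type :=
  | TVar : nat -> term
  | TZero : term
  | TOne : term
  | TAdd : term -> term -> term
  | TMul : term -> term -> term.

Inductive formula : Type :=
  | FEq : term -> term -> formula
  | FLe : term -> term -> formula
  | FNot : formula -> formula
  | FAnd : formula -> formula -> formula
  | FOr : formula -> formula -> formula
  | FImp : formula -> formula -> formula
  | FAll : nat -> formula -> formula
  | FEx : nat -> formula -> formula.

Fixpoint term_fv (i : nat) (t : term) : bool :=
  match t with
  | TVar j => Nat.eqb i j
  | TZero | TOne => false
  | TAdd a b | TMul a b => term_fv i a || term_fv i b
  end.

Fixpoint form_fv (i : nat) (f : formula) : bool :=
  match f with
  | FEq a b | FLe a b => term_fv i a || term_fv i b
  | FNot g => form_fv i g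
  | FAnd g h | FOr g h | FImp g h => form_fv i g || form_fv i h
  | FAll j g | FEx j g => negb (Nat.eqb i j) && form_fv i g
  end.

Definition sentence (f : formula) : Prop := forall i, form_fv i f = false.

(** * Structures for the language {0,1,+,*,<=} (equality is Leibniz) *)
Record structure : Type := Structure {
  carrier :> Type;
  s_zero : carrier;
  s_one : carrier;
  s_add : carrier -> carrier -> carrier;
  s_mul : carrier -> carrier -> carrier;
  s_le : carrier -> carrier -> Prop
}.

Definition update {M : Type} (rho : nat -> M) (i : nat) (x : M) : nat -> M :=
  fun j => if Nat.eqb j i then x else rho j.

Fixpoint eval (M : structure) (rho : nat -> M) (t : term) : M :=
  match t with
  | TVar j => rho j
  | TZero => s_zero M
  | TOne => s_one M
  | TAdd a b => s_add M (eval M rho a) (eval M rho b)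
  | TMul a b => s_mul M (eval M rho a) (eval M rho b)
  end.

Fixpoint sat (M : structure) (rho : nat -> M) (f : formula) : Prop :=
  match f with
  | FEq a b => eval M rho a = eval M rho b
  | FLe a b => s_le M (eval M rho a) (eval M rho b)
  | FNot g => ~ sat M rho g
  | FAnd g h => sat M rho g /\ sat M rho h
  | FOr g h => sat M rho g \/ sat M rho h
  | FImp g h => sat M rho g -> sat M rho h
  | FAll j g => forall x : M, sat M (update rho j x) g
  | FEx j g => exists x : M, sat M (update rho j x) g
  end.

Definition models (M : structure) (f : formula) : Prop :=
  forall rho : nat -> M, sat M rho f.

Definition Nstd : structure := Structure nat 0 1 Nat.add Nat.mul le.

Definition models_ThN (B : structure) : Prop :=
  forall f, sentence f -> models Nstd f -> models B f.

Fixpoint numeral (B : structure) (n : nat) : B :=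
  match n with
  | 0 => s_zero B
  | S k => s_add B (numeral B k) (s_one B)
  end.

Definition nonstandard_elt (B : structure) (x : B) : Prop :=
  forall n : nat, x <> numeral B n.

Definition nonstandard (B : structure) : Prop :=
  exists x : B, nonstandard_elt B x.

Definition divides (B : structure) (d x : B) : Prop :=
  exists q : B, s_mul B d q = x.

(** phi (free variables among 0,1) defines the graph of x |-> 2^x in N,
    with variable 0 the exponent and variable 1 the value *)
Definition defines_pow2 (phi : formula) : Prop :=
  (forall i, 1 < i -> form_fv i phi = false) /\
  forall rho : nat -> nat, sat Nstd rho phi <-> rho 1 = 2 ^ (rho 0).

(** e = 2^m in B, computed with the exponential definable in B *)
Definition is_pow2 (B : structure) (m e : B) : Prop :=
  exists phi : formula, defines_pow2 phi /\
    sat B (update (update (fun _ => s_zero B) 0 m) 1 e) phi.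

Definition good (B : structure) (Delta Q : B) : Prop :=
  forall n : nat, 0 < n ->
    divides B (numeral B n) Q /\
    exists e : B, is_pow2 B (s_mul B (numeral B n) Delta) e /\ divides B e Q.

Definition A_univ (B : structure) (Delta : B) (x : B) : Prop :=
  exists Q : B, good B Delta Q /\
    exists k : nat, x = s_add B Q (numeral B k) \/ s_add B x (numeral B k) = Q.

Fixpoint nmul (B : structure) (n : nat) (y : B) : B :=
  match n with
  | 0 => s_zero B
  | S k => s_add B (nmul B k y) y
  end.

Definition slt (B : structure) (x y : B) : Prop := s_le B x y /\ x <> y.

Definition substructure_univ (B : structure) (P : B -> Prop) : Prop :=
  P (s_zero B) /\ P (s_one B) /\
  (forall x y, P x -> P y -> P (s_add B x y)) /\
  (forall x y, P x -> P y -> P (s_mul B x y)).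

(** Presburger axioms, with all quantifiers relativized to P (the induced
    substructure on P, with operations and <= restricted from B) *)
Definition presburger_rel (B : structure) (P : B -> Prop) : Prop :=
  (forall z, P z -> s_zero B <> s_add B z (s_one B)) /\
  (forall x, P x -> x <> s_zero B -> exists z, P z /\ x = s_add B z (s_one B)) /\
  (forall x y z, P x -> P y -> P z -> s_add B x z = s_add B y z -> x = y) /\
  (forall x, P x -> s_add B x (s_zero B) = x) /\
  (forall x y z, P x -> P y -> P z ->
     s_add B (s_add B x y) z = s_add B x (s_add B y z)) /\
  (forall x y, P x -> P y -> s_add B x y = s_add B y x) /\
  (forall x y, P x -> P y ->
     (s_le B x y <-> exists z, P z /\ s_add B x z = y)) /\
  (forall n : nat, 0 < n -> forall x, P x ->
     exists y, P y /\ s_le B (nmul B n y) x /\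
               slt B x (nmul B n (s_add B y (s_one B)))).

From Stdlib Require Import Arith Bool Lia List.
From mathcomp Require ssreflect ssrfun ssrbool eqtype ssrnat div fintype prime bigop zify.

(* Good elements are
   closed under sums, products with arbitrary elements and differences, and, which is what
   the factors 2^(nDelta) are for, under division by a standard n: if n q is divisible by
   2^((m+1)Delta) then q is divisible by 2^(mDelta), because the 2-adic valuation of n is
   below n <= Delta.  A nonzero good element exceeds every numeral.  Hence A is closed under
   the operations, and for x = Q +- k with Q = n q the Euclidean division x = n w + s with
   s < n standard has its quotient w in A.
   Each fact about B used here is a sentence true in N; exponentiation is expressed through
   Goedel's beta function, whose existence in N is the Chinese remainder theorem. *)

Module NatArith.
Import ssreflect ssrfun ssrbool eqtype ssrnat div fintype prime bigop zify.

Lemma two_adic_dvdn n D a q : 0 < n -> n <= D -> 2 ^ (a + D) %| n * q -> 2 ^ a %| q.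
Proof.
move=> n_gt0 le_nD; have [-> | q_gt0] := posnP q; first by rewrite dvdn0.
rewrite !pfactor_dvdn ?muln_gt0 ?n_gt0 // lognM // => le_aD_log.
have := ltn_logl 2 n_gt0; lia.
Qed.

Section Chinese.
Variables (m r : nat -> nat) (k : nat).
Hypothesis m_coprime : forall i j, i < j <= k -> coprime (m i) (m j).

Lemma chinese_seq : exists c, forall i, i <= k -> c = r i %[mod m i].
Proof.
suff: forall l, l <= k -> exists c, forall i, i <= l -> c = r i %[mod m i] by apply.
elim=> [|l IHl] le_lk; first by exists (r 0) => i; rewrite leqn0 => /eqP ->.
have [c Hc] := IHl (ltnW le_lk).
pose P := \prod_(i < l.+1) m i.
have dvd_P i : i <= l -> m i %| P.
  move=> le_il; rewrite /P (bigD1 (Ordinal (le_il : i < l.+1))) //=.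
  exact: dvdn_mulr.
have coprime_P : coprime P (m l.+1).
  apply: (big_ind (fun p => coprime p (m l.+1))) => [|p p' ? ?|i _].
  - exact: coprime1n.
  - by rewrite coprimeMl; apply/andP.
  - by apply: m_coprime; rewrite ltn_ord.
exists (chinese P (m l.+1) c (r l.+1)) => i; rewrite leq_eqVlt ltnS.
case/orP=> [/eqP -> | le_il]; first exact: chinese_modr.
rewrite -(Hc i le_il) -(modn_dvdm _ (dvd_P i le_il)) chinese_modl //.
exact: modn_dvdm (dvd_P i le_il).
Qed.
End Chinese.

Lemma beta_powers_of_two x : exists c d, forall i, i <= x ->
  2 ^ i < (i.+1 * d).+1 /\ exists q, c = q * (i.+1 * d).+1 + 2 ^ i.
Proof.
pose d := (2 ^ x)`!; pose m i := (i.+1 * d).+1.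
have m_coprime i j : i < j <= x -> coprime (m i) (m j).
  case/andP=> lt_ij le_jx.
  have -> : m j = m i + (j - i) * d.
    by rewrite /m addSn -mulnDl addSn subnKC // ltnW.
  rewrite /coprime gcdnDl -/(coprime _ _) coprimeMr.
  have coprime_m_d : coprime (m i) d.
    by rewrite coprime_sym /coprime /m -addn1 gcdnMDl gcdn1.
  rewrite coprime_m_d andbT; apply: coprime_dvdr coprime_m_d.
  apply: dvdn_fact; rewrite subn_gt0 lt_ij /=.
  by apply: leq_trans (leq_subr _ _) (leq_trans le_jx (ltnW (ltn_expl _ _))).
have [c Hc] := @chinese_seq m (fun i => 2 ^ i) x m_coprime.
exists c, d => i le_ix.
have lt_pow_m : 2 ^ i < m i.
  rewrite /m ltnS; apply: leq_trans (leq_pexp2l _ le_ix) _ => //.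
  exact: leq_trans (fact_geq _) (leq_pmull _ _).
split=> //; exists (c %/ m i).
by rewrite {1}(divn_eq c (m i)) (Hc i le_ix) modn_small.
Qed.

End NatArith.

Lemma expn_pow m n : ssrnat.expn m n = m ^ n.
Proof. induction n as [|n IH]; [reflexivity|]. now rewrite ssrnat.expnS, IH. Qed.

Lemma two_adic n D a q :
  0 < n -> n <= D -> Nat.divide (2 ^ (a + D)) (n * q) -> Nat.divide (2 ^ a) q.
Proof.
intros Hn HnD Hdiv.
assert (H : div.dvdn (ssrnat.expn 2 a) q = true).
{ apply (NatArith.two_adic_dvdn n D).
  - now apply (ssrbool.introT ssrnat.ltP).
  - now apply (ssrbool.introT ssrnat.leP).
  - apply (ssrbool.introT div.dvdnP). now rewrite expn_pow. }
apply (ssrbool.elimT div.dvdnP) in H. now rewrite expn_pow in H.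
Qed.

Lemma beta_powers_of_two x : exists c d, forall i, i <= x ->
  2 ^ i < 1 + (i + 1) * d /\ exists q, c = q * (1 + (i + 1) * d) + 2 ^ i.
Proof.
destruct (NatArith.beta_powers_of_two x) as (c & d & H). exists c, d. intros i Hi.
destruct (H i (ssrbool.introT ssrnat.leP Hi)) as [Hlt [q Hq]].
rewrite expn_pow in Hlt, Hq. apply (ssrbool.elimT ssrnat.ltP) in Hlt.
replace (1 + (i + 1) * d) with (S (S i * d)) by lia. split; [exact Hlt|]. now exists q.
Qed.

Fixpoint term_maxvar (t : term) : nat :=
  match t with
  | TVar j => j
  | TZero | TOne => 0
  | TAdd a b | TMul a b => Nat.max (term_maxvar a) (term_maxvar b)
  end.

Fixpoint form_maxvar (f : formula) : nat :=
  match f with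
  | FEq a b | FLe a b => Nat.max (term_maxvar a) (term_maxvar b)
  | FNot g | FAll _ g | FEx _ g => form_maxvar g
  | FAnd g h | FOr g h | FImp g h => Nat.max (form_maxvar g) (form_maxvar h)
  end.

Lemma term_fv_maxvar i t : term_fv i t = true -> i <= term_maxvar t.
Proof.
induction t; cbn; try discriminate; intros H.
- now apply Nat.eqb_eq in H as ->.
- apply orb_true_iff in H as [H | H]; [specialize (IHt1 H) | specialize (IHt2 H)]; lia.
- apply orb_true_iff in H as [H | H]; [specialize (IHt1 H) | specialize (IHt2 H)]; lia.
Qed.

Lemma form_fv_maxvar i f : form_fv i f = true -> i <= form_maxvar f.
Proof.
induction f; cbn; intros H; auto;
  try (apply andb_true_iff in H as [_ H]; auto);
  apply orb_true_iff in H as [H | H];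
  solve [apply term_fv_maxvar in H; lia | apply IHf1 in H; lia | apply IHf2 in H; lia].
Qed.

Definition fv_below (k : nat) (f : formula) : bool :=
  forallb (fun i => negb (form_fv i f)) (seq k (S (form_maxvar f) - k)).

Lemma fv_belowP k f : fv_below k f = true -> forall i, k <= i -> form_fv i f = false.
Proof.
intros Hf i Hi. destruct (form_fv i f) eqn:E; [|reflexivity].
pose proof (form_fv_maxvar i f E).
apply forallb_forall with (x := i) in Hf; [now rewrite E in Hf|].
apply in_seq; lia.
Qed.

Local Notation "# i" := (TVar i) (at level 1, format "# i").

(* Goedel's beta function: with c := #10 and d := #11, [beta_form i v] says that
   v is the remainder of c modulo 1 + (i+1) d.  Variables 10 to 15 are internal. *)
Definition beta_modulus (i : term) : term := TAdd TOne (TMul (TAdd i TOne) #11).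

Definition beta_form (i v : term) : formula :=
  FEx 15 (FAnd (FEq #10 (TAdd (TMul #15 (beta_modulus i)) v))
               (FLe (TAdd v TOne) (beta_modulus i))).

Definition pow2_form (a b : nat) : formula :=
  FEx 10 (FEx 11 (FAnd (beta_form TZero TOne)
   (FAnd (FAll 12 (FImp (FLe (TAdd #12 TOne) #a)
           (FEx 13 (FEx 14 (FAnd (beta_form #12 #13)
              (FAnd (beta_form (TAdd #12 TOne) #14) (FEq #14 (TAdd #13 #13))))))))
         (beta_form #a #b)))).

Section Semantics.
Variable M : structure.
Local Infix "+." := (s_add M) (at level 50, left associativity).
Local Infix "*." := (s_mul M) (at level 40, left associativity).
Local Notation o1 := (s_one M).

Definition beta_rel (c d i v : M) : Prop :=
  exists q, c = q *. (o1 +. (i +. o1) *. d) +. v /\ s_le M (v +. o1) (o1 +. (i +. o1) *. d).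

Definition pow2_rel (x y : M) : Prop :=
  exists c d, beta_rel c d (s_zero M) o1 /\
   (forall i, s_le M (i +. o1) x ->
      exists u v, beta_rel c d i u /\ beta_rel c d (i +. o1) v /\ v = u +. u) /\
   beta_rel c d x y.

Lemma sat_pow2_form rho a b :
  a < 10 -> b < 10 -> sat M rho (pow2_form a b) <-> pow2_rel (rho a) (rho b).
Proof.
intros Ha Hb.
do 10 (destruct a as [|a]; [do 10 (destruct b as [|b]; [reflexivity|]); lia|]). lia.
Qed.
End Semantics.

Lemma pow2_form_fv i : 1 < i -> form_fv i (pow2_form 0 1) = false.
Proof. apply (fv_belowP 2). reflexivity. Qed.

Lemma beta_rel_nat_mod c d i v :
  beta_rel Nstd c d i v -> v = c mod (1 + (i + 1) * d).
Proof. intros [q [Hc Hv]]; cbn in Hc, Hv. apply Nat.mod_unique with q; lia. Qed.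

Lemma pow2_rel_nat x y : pow2_rel Nstd x y <-> y = 2 ^ x.
Proof.
split.
- intros (c & d & H0 & Hstep & Hx).
  assert (Hpow : forall i, i <= x -> beta_rel Nstd c d i (2 ^ i)).
  { induction i as [|i IH]; intros Hi; [exact H0|].
    destruct (Hstep i) as (u & v & Hu & Hv & ->); [cbn; lia|].
    assert (u = 2 ^ i) as ->.
    { rewrite (beta_rel_nat_mod _ _ _ _ Hu). symmetry. apply beta_rel_nat_mod, IH; lia. }
    replace (2 ^ S i) with (2 ^ i + 2 ^ i) by (cbn; lia).
    replace (S i) with (i + 1) by lia. exact Hv. }
  rewrite (beta_rel_nat_mod _ _ _ _ Hx). symmetry. apply beta_rel_nat_mod, Hpow; lia.
- intros ->. destruct (beta_powers_of_two x) as (c & d & Hbeta).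
  assert (Hpow : forall i, i <= x -> beta_rel Nstd c d i (2 ^ i)).
  { intros i Hi. destruct (Hbeta i Hi) as [Hlt [q Hq]]. exists q. cbn; lia. }
  exists c, d. split; [apply (Hpow 0); lia|]. split; [|apply Hpow; lia].
  intros i Hi; cbn in Hi. exists (2 ^ i), (2 ^ (i + 1)).
  split; [apply Hpow; lia|]. split; [apply (Hpow (i + 1)); lia|].
  rewrite Nat.pow_add_r. cbn. lia.
Qed.

Lemma sat_pow2_form_nat rho a b :
  a < 10 -> b < 10 -> sat Nstd rho (pow2_form a b) <-> rho b = 2 ^ rho a.
Proof. intros Ha Hb. rewrite sat_pow2_form by assumption. apply pow2_rel_nat. Qed.

Lemma defines_pow2_form : defines_pow2 (pow2_form 0 1).
Proof. split; [exact pow2_form_fv | intros rho; apply sat_pow2_form_nat; lia]. Qed.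

Definition two_adic_form : formula :=
  FAll 0 (FAll 1 (FAll 2 (FAll 3 (FAll 4 (FAll 5 (FAll 6
   (FImp (FNot (FEq #0 TZero)) (FImp (FLe #0 #1) (FImp (FEq #6 (TAdd #2 #1))
   (FImp (pow2_form 2 4) (FImp (pow2_form 6 5)
   (FImp (FEx 7 (FEq (TMul #5 #7) (TMul #0 #3))) (FEx 7 (FEq (TMul #4 #7) #3)))))))))))))).

Lemma two_adic_form_nat : models Nstd two_adic_form.
Proof.
intros rho n D a q e E b Hn HnD Hb He HE Hdiv.
apply sat_pow2_form_nat in He, HE; try lia. cbn in *. subst.
destruct Hdiv as [t Ht]. destruct (two_adic n D a q) as [z Hz]; [lia | lia | exists t; lia |].
exists z; lia.
Qed.

Section Model.
Variable B : structure.
Hypothesis HB : models_ThN B.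
Local Infix "+." := (s_add B) (at level 50, left associativity).
Local Infix "*." := (s_mul B) (at level 40, left associativity).
Local Notation z0 := (s_zero B).
Local Notation o1 := (s_one B).

Lemma transfer f : fv_below 0 f = true -> models Nstd f -> sat B (fun _ => z0) f.
Proof. intros Hf HN. apply HB; [intro i; apply (fv_belowP 0); [exact Hf | lia] | exact HN]. Qed.

Lemma s_add_assoc x y z : x +. y +. z = x +. (y +. z).
Proof.
refine (transfer (FAll 0 (FAll 1 (FAll 2 (FEq (TAdd (TAdd #0 #1) #2) (TAdd #0 (TAdd #1 #2))))))
  eq_refl _ x y z).
intros rho; cbn; lia.
Qed.

Lemma s_add_comm x y : x +. y = y +. x.
Proof.
refine (transfer (FAll 0 (FAll 1 (FEq (TAdd #0 #1) (TAdd #1 #0)))) eq_refl _ x y).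
intros rho; cbn; lia.
Qed.

Lemma s_add_0_l x : z0 +. x = x.
Proof. refine (transfer (FAll 0 (FEq (TAdd TZero #0) #0)) eq_refl _ x). intros rho; cbn; lia. Qed.

Lemma s_mul_assoc x y z : x *. y *. z = x *. (y *. z).
Proof.
refine (transfer (FAll 0 (FAll 1 (FAll 2 (FEq (TMul (TMul #0 #1) #2) (TMul #0 (TMul #1 #2))))))
  eq_refl _ x y z).
intros rho; cbn; lia.
Qed.

Lemma s_mul_comm x y : x *. y = y *. x.
Proof.
refine (transfer (FAll 0 (FAll 1 (FEq (TMul #0 #1) (TMul #1 #0)))) eq_refl _ x y).
intros rho; cbn; lia.
Qed.

Lemma s_mul_1_l x : o1 *. x = x.
Proof. refine (transfer (FAll 0 (FEq (TMul TOne #0) #0)) eq_refl _ x). intros rho; cbn; lia. Qed.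

Lemma s_mul_0_l x : z0 *. x = z0.
Proof.
refine (transfer (FAll 0 (FEq (TMul TZero #0) TZero)) eq_refl _ x).
intros rho; cbn; lia.
Qed.

Lemma s_mul_add_distr_r x y z : (x +. y) *. z = x *. z +. y *. z.
Proof.
refine (transfer
  (FAll 0 (FAll 1 (FAll 2 (FEq (TMul (TAdd #0 #1) #2) (TAdd (TMul #0 #2) (TMul #1 #2))))))
  eq_refl _ x y z).
intros rho; cbn; lia.
Qed.

Lemma s_semiring : semi_ring_theory z0 o1 (s_add B) (s_mul B) eq.
Proof.
constructor; intros; auto using s_add_0_l, s_add_comm, s_mul_1_l, s_mul_0_l, s_mul_comm,
  s_mul_add_distr_r; symmetry; auto using s_add_assoc, s_mul_assoc.
Qed.

Add Ring s_ring : s_semiring.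

Lemma s_add_cancel_r x y z : x +. z = y +. z -> x = y.
Proof.
refine (transfer (FAll 0 (FAll 1 (FAll 2 (FImp (FEq (TAdd #0 #2) (TAdd #1 #2)) (FEq #0 #1)))))
  eq_refl _ x y z).
intros rho; cbn; lia.
Qed.

Lemma s_le_add x y : s_le B x y <-> exists z, x +. z = y.
Proof.
refine (transfer (FAll 0 (FAll 1 (FAnd (FImp (FLe #0 #1) (FEx 2 (FEq (TAdd #0 #2) #1)))
                                      (FImp (FEx 2 (FEq (TAdd #0 #2) #1)) (FLe #0 #1)))))
  eq_refl _ x y).
intros rho; cbn; intros a b. split; [exists (b - a); lia | intros [c Hc]; lia].
Qed.

Lemma s_add_total x y : (exists z, x +. z = y) \/ (exists z, y +. z = x).
Proof.
refine (transfer (FAll 0 (FAll 1 (FOr (FEx 2 (FEq (TAdd #0 #2) #1)) (FEx 2 (FEq (TAdd #1 #2) #0)))))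
  eq_refl _ x y).
intros rho; cbn; intros a b.
destruct (Nat.le_ge_cases a b); [left; exists (b - a) | right; exists (a - b)]; lia.
Qed.

Lemma s_zero_ne_succ x : z0 <> x +. o1.
Proof.
refine (transfer (FAll 0 (FNot (FEq TZero (TAdd #0 TOne)))) eq_refl _ x).
intros rho; cbn; lia.
Qed.

Lemma s_zero_or_succ x : x = z0 \/ exists z, x = z +. o1.
Proof.
refine (transfer (FAll 0 (FOr (FEq #0 TZero) (FEx 1 (FEq #0 (TAdd #1 TOne))))) eq_refl _ x).
intros rho; cbn; intros [|a]; [left | right; exists a]; lia.
Qed.

Lemma s_mul_cancel_l n x y : n <> z0 -> n *. x = n *. y -> x = y.
Proof.
refine (transfer (FAll 0 (FAll 1 (FAll 2
  (FImp (FNot (FEq #0 TZero)) (FImp (FEq (TMul #0 #1) (TMul #0 #2)) (FEq #1 #2))))))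
  eq_refl _ n x y).
intros rho; cbn; intros a b c Ha. apply Nat.mul_cancel_l, Ha.
Qed.

Lemma divides_add_inv_r d x y : divides B d (x +. y) -> divides B d x -> divides B d y.
Proof.
refine (transfer (FAll 0 (FAll 1 (FAll 2 (FImp (FEx 3 (FEq (TMul #0 #3) (TAdd #1 #2)))
         (FImp (FEx 3 (FEq (TMul #0 #3) #1)) (FEx 3 (FEq (TMul #0 #3) #2)))))))
  eq_refl _ d x y).
intros rho; cbn; intros a b c [q Hq] [q' Hq']. exists (q - q'). nia.
Qed.

Lemma pow2_rel_total x : exists y, pow2_rel B x y.
Proof.
refine (transfer (FAll 0 (FEx 1 (pow2_form 0 1))) eq_refl _ x).
intros rho a. exists (2 ^ a). apply sat_pow2_form_nat; cbn; lia.
Qed.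

Lemma pow2_rel_unique x y y' : pow2_rel B x y -> pow2_rel B x y' -> y = y'.
Proof.
refine (transfer
  (FAll 0 (FAll 1 (FAll 2 (FImp (pow2_form 0 1) (FImp (pow2_form 0 2) (FEq #1 #2))))))
  eq_refl _ x y y').
intros rho a b c H1 H2. apply sat_pow2_form_nat in H1, H2; try lia. cbn in *; congruence.
Qed.

Lemma pow2_rel_of_defines phi x y : defines_pow2 phi ->
  sat B (update (update (fun _ => z0) 0 x) 1 y) phi -> pow2_rel B x y.
Proof.
intros [Hfv Hphi]. apply (HB (FAll 0 (FAll 1 (FImp phi (pow2_form 0 1))))).
- intros [|[|i]]; [reflexivity | reflexivity |].
  cbn [form_fv]. rewrite Hfv, pow2_form_fv by lia. reflexivity.
- intros rho a b H. apply Hphi in H. apply sat_pow2_form_nat; cbn in *; lia.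
Qed.

Lemma is_pow2_iff x y : is_pow2 B x y <-> pow2_rel B x y.
Proof.
split.
- intros (phi & Hphi & H). exact (pow2_rel_of_defines phi x y Hphi H).
- intros H. exists (pow2_form 0 1). split; [exact defines_pow2_form | exact H].
Qed.

Lemma s_two_adic n D a q e E :
  n <> z0 -> s_le B n D -> pow2_rel B a e -> pow2_rel B (a +. D) E ->
  divides B E (n *. q) -> divides B e q.
Proof.
intros Hn HnD He HE Hdiv.
exact (transfer two_adic_form eq_refl two_adic_form_nat
         n D a q e E (a +. D) Hn HnD eq_refl He HE Hdiv).
Qed.

Local Notation num := (numeral B).

Lemma numeral_add a b : num (a + b) = num a +. num b.
Proof.
induction b as [|b IH]; cbn.
- rewrite Nat.add_0_r. ring.
- rewrite Nat.add_succ_r. cbn. rewrite IH. ring.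
Qed.

Lemma numeral_mul a b : num (a * b) = num a *. num b.
Proof. induction a as [|a IH]; cbn; [ring | rewrite numeral_add, IH; ring]. Qed.

Lemma nmul_numeral n y : nmul B n y = num n *. y.
Proof. induction n as [|n IH]; cbn; [ring | rewrite IH; ring]. Qed.

Lemma s_add_cancel_l x y z : z +. x = z +. y -> x = y.
Proof. intros H. apply (s_add_cancel_r _ _ z). now rewrite (s_add_comm x), (s_add_comm y). Qed.

Lemma s_add_eq_0_l x y : x +. y = z0 -> x = z0.
Proof.
intros H. destruct (s_zero_or_succ x) as [Hx | [w ->]]; [exact Hx|].
exfalso. apply (s_zero_ne_succ (w +. y)). rewrite <- H. ring.
Qed.

Lemma numeral_inj a b : num a = num b -> a = b.
Proof.
revert b; induction a as [|a IH]; intros [|b]; cbn; intros H; auto.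
- now apply s_zero_ne_succ in H.
- symmetry in H. now apply s_zero_ne_succ in H.
- f_equal. apply IH, (s_add_cancel_r _ _ o1 H).
Qed.

Lemma below_numeral c x y : x +. y = num c -> exists j, x = num j.
Proof.
revert x; induction c as [|c IH]; intros x H.
- exists 0. exact (s_add_eq_0_l x y H).
- destruct (s_zero_or_succ x) as [-> | [w ->]]; [now exists 0|].
  destruct (IH w) as [j ->]; [|now exists (S j)].
  apply (s_add_cancel_r _ _ o1). transitivity (w +. o1 +. y); [ring | exact H].
Qed.

Lemma divides_add d x y : divides B d x -> divides B d y -> divides B d (x +. y).
Proof. intros [q1 <-] [q2 <-]. exists (q1 +. q2). ring. Qed.

Lemma divides_mul_r d x y : divides B d x -> divides B d (x *. y).
Proof. intros [q <-]. exists (q *. y). ring. Qed.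

Section Universe.
Variable Delta : B.
Hypothesis HDelta : nonstandard_elt B Delta.
Local Notation good := (good B Delta).
Local Notation A := (A_univ B Delta).

Lemma numeral_le_Delta n : s_le B (num n) Delta.
Proof.
apply s_le_add. destruct (s_add_total (num n) Delta) as [H | [w Hw]]; [exact H|].
destruct (below_numeral n Delta w Hw) as [j Hj]. now destruct (HDelta j).
Qed.

Lemma good_iff Q : good Q <-> forall n, 0 < n ->
  divides B (num n) Q /\ forall e, pow2_rel B (num n *. Delta) e -> divides B e Q.
Proof.
split; intros H n Hn; destruct (H n Hn) as [Hdiv Hpow]; split; [exact Hdiv | | exact Hdiv |].
- intros e He. destruct Hpow as (e' & He' & Hdiv'). apply is_pow2_iff in He'.
  now rewrite (pow2_rel_unique _ _ _ He He').
- destruct (pow2_rel_total (num n *. Delta)) as [e He].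
  exists e. split; [now apply is_pow2_iff | exact (Hpow e He)].
Qed.

Lemma good_0 : good z0.
Proof. apply good_iff. intros n _. split; [|intros e _]; exists z0; ring. Qed.

Lemma good_add Q R : good Q -> good R -> good (Q +. R).
Proof.
rewrite !good_iff. intros HQ HR n Hn.
destruct (HQ n Hn) as [HQ1 HQ2], (HR n Hn) as [HR1 HR2].
split; [|intros e He]; apply divides_add; auto.
Qed.

Lemma good_mul_r Q y : good Q -> good (Q *. y).
Proof.
rewrite !good_iff. intros HQ n Hn. destruct (HQ n Hn) as [HQ1 HQ2].
split; [|intros e He]; apply divides_mul_r; auto.
Qed.

Lemma good_add_inv_r Q R : good Q -> good (Q +. R) -> good R.
Proof.
rewrite !good_iff. intros HQ HQR n Hn.
destruct (HQ n Hn) as [HQ1 HQ2], (HQR n Hn) as [HQR1 HQR2].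
split; [|intros e He]; apply (divides_add_inv_r _ Q); auto.
Qed.

Lemma good_ge_numeral q t : good q -> q <> z0 -> exists w, q = num t +. w.
Proof.
rewrite good_iff. intros Hq Hq0. destruct (proj1 (Hq (S t) (Nat.lt_0_succ t))) as [s <-].
destruct (s_zero_or_succ s) as [-> | [u ->]]; [exfalso; apply Hq0; ring|].
exists (num (S t) *. u +. o1). cbn. ring.
Qed.

Lemma good_below_numeral R y c : good R -> R +. y = num c -> R = z0.
Proof.
intros HR Hc. destruct (s_zero_or_succ R) as [HR0 | [r Hr]]; [exact HR0 | exfalso].
destruct (good_ge_numeral R (S c) HR) as [w Hw]; [rewrite Hr; apply not_eq_sym, s_zero_ne_succ|].
apply (s_zero_ne_succ (w +. y)), (s_add_cancel_l _ _ (num c)).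
rewrite <- Hc at 1. rewrite Hw. cbn. ring.
Qed.

Lemma good_div Q n q : 0 < n -> good Q -> num n *. q = Q -> good q.
Proof.
rewrite !good_iff. intros Hn HQ Hq m Hm.
assert (Hn0 : num n <> z0) by (intros H; apply (numeral_inj n 0) in H; lia).
split.
- destruct (proj1 (HQ (n * m) ltac:(nia))) as [t Ht].
  exists t. apply (s_mul_cancel_l (num n)); [exact Hn0|].
  rewrite Hq, <- Ht, numeral_mul. ring.
- intros e He. destruct (pow2_rel_total (num (S m) *. Delta)) as [E HE].
  apply (s_two_adic (num n) Delta (num m *. Delta) q e E Hn0 (numeral_le_Delta n) He).
  + replace (num m *. Delta +. Delta) with (num (S m) *. Delta) by (cbn; ring). exact HE.
  + rewrite Hq. exact (proj2 (HQ (S m) (Nat.lt_0_succ m)) E HE).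
Qed.

Lemma A_univ_intro Q x a b : good Q -> x +. num a = Q +. num b -> A x.
Proof.
intros HQ Hx. exists Q. split; [exact HQ|].
destruct (Nat.le_ge_cases a b) as [Hab | Hab]; [exists (b - a); left | exists (a - b); right];
  apply (s_add_cancel_r _ _ (num (Nat.min a b))).
- replace b with (b - a + a) in Hx by lia. rewrite numeral_add in Hx.
  replace (Nat.min a b) with a by lia. rewrite Hx. ring.
- replace a with (a - b + b) in Hx by lia. rewrite numeral_add in Hx.
  replace (Nat.min a b) with b by lia. rewrite <- Hx. ring.
Qed.

Lemma A_univ_balanced x : A x -> exists Q, good Q /\ exists a b, x +. num a = Q +. num b.
Proof.
intros (Q & HQ & k & [-> | Hk]); exists Q; (split; [exact HQ|]);
  [exists 0, k | exists k, 0; rewrite <- Hk]; cbn; ring.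
Qed.

Lemma A_univ_intro_diff R1 R2 x c1 c2 :
  good R1 -> good R2 -> x +. R1 +. num c1 = R2 +. num c2 -> A x.
Proof.
intros H1 H2 Hx. destruct (s_add_total R1 R2) as [[R <-] | [R <-]].
- apply (A_univ_intro R x c1 c2 (good_add_inv_r R1 R H1 H2)).
  apply (s_add_cancel_l _ _ R1). transitivity (x +. R1 +. num c1); [ring | rewrite Hx; ring].
- assert (HR : R +. (x +. num c1) = num c2).
  { apply (s_add_cancel_l _ _ R2). transitivity (x +. (R2 +. R) +. num c1); [ring|].
    rewrite Hx; ring. }
  apply (good_add_inv_r R2 R H2) in H1. rewrite (good_below_numeral R _ _ H1 HR) in HR.
  apply (A_univ_intro z0 x c1 c2 good_0). rewrite <- HR. ring.
Qed.

Lemma A_univ_substructure : substructure_univ B A.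
Proof.
split; [|split; [|split]].
- apply (A_univ_intro z0 z0 0 0 good_0). reflexivity.
- apply (A_univ_intro z0 o1 0 1 good_0). cbn. ring.
- intros x y Hx Hy.
  destruct (A_univ_balanced x Hx) as (Q & HQ & a & b & Hab).
  destruct (A_univ_balanced y Hy) as (Q' & HQ' & a' & b' & Hab').
  apply (A_univ_intro (Q +. Q') _ (a + a') (b + b') (good_add Q Q' HQ HQ')).
  rewrite !numeral_add. transitivity ((x +. num a) +. (y +. num a')); [ring|].
  rewrite Hab, Hab'. ring.
- intros x y Hx Hy.
  destruct (A_univ_balanced x Hx) as (Q & HQ & a & b & Hab).
  destruct (A_univ_balanced y Hy) as (Q' & HQ' & a' & b' & Hab').
  (* expand (x + a) (y + a') = (Q + b) (Q' + b') *)
  apply (A_univ_intro_diff (Q *. num a' +. Q' *. num a) (Q *. Q' +. Q *. num b' +. Q' *. num b)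
           _ (b * a' + b' * a) (b * b' + a * a')).
  + apply good_add; apply good_mul_r; assumption.
  + repeat apply good_add; apply good_mul_r; assumption.
  + rewrite !numeral_add, !numeral_mul.
    apply (s_add_cancel_r _ _ (x *. num a' +. y *. num a)).
    transitivity (x *. y +. x *. num a' +. y *. num a +. (x +. num a) *. num a'
                  +. (y +. num a') *. num a); [rewrite Hab, Hab'; ring|].
    transitivity ((x +. num a) *. (y +. num a') +. num a *. num a' +. x *. num a' +. y *. num a);
      [ring|].
    rewrite Hab, Hab'. ring.
Qed.

Lemma nmul_bounds n w s x : s < n -> x = num s +. num n *. w ->
  s_le B (nmul B n w) x /\ slt B x (nmul B n (w +. o1)).
Proof.
intros Hs ->. rewrite !nmul_numeral. split; [|split].
- apply s_le_add. exists (num s). ring.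
- apply s_le_add. exists (num (n - s)).
  transitivity (num n *. w +. num (s + (n - s))); [rewrite numeral_add; ring|].
  replace (s + (n - s)) with n by lia. ring.
- intros Heq. assert (E : num s = num n).
  { apply (s_add_cancel_l _ _ (num n *. w)). rewrite (s_add_comm _ (num s)), Heq. ring. }
  apply numeral_inj in E. lia.
Qed.

Lemma A_univ_div_rem n x : 0 < n -> A x -> exists w s, A w /\ s < n /\ x = num s +. num n *. w.
Proof.
intros Hn (Q & HQ & k & Hk).
destruct (proj1 (proj1 (good_iff Q) HQ n Hn)) as [q Hq].
pose proof (good_div Q n q Hn HQ Hq) as Hgq.
pose proof (Nat.mod_upper_bound k n ltac:(lia)) as Hmod.
destruct Hk as [-> | Hk].
- exists (q +. num (k / n)), (k mod n). split; [|split; [exact Hmod|]].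
  + apply (A_univ_intro q _ 0 (k / n) Hgq). cbn. ring.
  + rewrite (Nat.div_mod k n) at 1 by lia. rewrite <- Hq, numeral_add, numeral_mul. ring.
- set (t := (k + n - 1) / n).
  assert (Ht : k <= n * t < k + n).
  { pose proof (Nat.div_mod (k + n - 1) n ltac:(lia)).
    pose proof (Nat.mod_upper_bound (k + n - 1) n ltac:(lia)). unfold t; lia. }
  assert (Hw : exists w, q = num t +. w).
  { destruct (s_zero_or_succ q) as [Hq0 | [r Hr]].
    - exists q. assert (t = 0) as ->; [|cbn; ring].
      assert (Hk0 : num k = z0).
      { apply (s_add_eq_0_l _ x). rewrite s_add_comm, Hk, <- Hq, Hq0. ring. }
      apply (numeral_inj k 0) in Hk0. nia.
    - apply (good_ge_numeral q t Hgq). rewrite Hr. apply not_eq_sym, s_zero_ne_succ. }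
  destruct Hw as [w Hw]. exists w, (n * t - k). split; [|split; [lia|]].
  + apply (A_univ_intro q w t 0 Hgq). rewrite Hw. cbn. ring.
  + apply (s_add_cancel_r _ _ (num k)). rewrite Hk, <- Hq, Hw.
    transitivity (num (n * t - k + k) +. num n *. w); [|rewrite numeral_add; ring].
    replace (n * t - k + k) with (n * t) by lia. rewrite numeral_mul. ring.
Qed.

Lemma A_univ_presburger : presburger_rel B A.
Proof.
split; [|split; [|split; [|split; [|split; [|split; [|split]]]]]].
- intros z _. apply s_zero_ne_succ.
- intros x Hx Hx0. destruct (s_zero_or_succ x) as [-> | [z ->]]; [contradiction|].
  exists z. split; [|reflexivity].
  destruct (A_univ_balanced _ Hx) as (Q & HQ & a & b & Hab).
  apply (A_univ_intro Q z (S a) b HQ). rewrite <- Hab. cbn. ring.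
- intros x y z _ _ _. apply s_add_cancel_r.
- intros x _. ring.
- intros x y z _ _ _. ring.
- intros x y _ _. ring.
- intros x y Hx Hy. rewrite s_le_add. split; [|intros (z & _ & Hz); now exists z].
  intros [z Hz]. exists z. split; [|exact Hz].
  destruct (A_univ_balanced x Hx) as (Q & HQ & a & b & Hab).
  destruct (A_univ_balanced y Hy) as (Q' & HQ' & a' & b' & Hab').
  apply (A_univ_intro_diff Q Q' z (b + a') (b' + a) HQ HQ').
  rewrite !numeral_add. transitivity ((x +. num a) +. z +. num a'); [rewrite Hab; ring|].
  transitivity (x +. z +. num a' +. num a); [ring|]. rewrite Hz, Hab'. ring.
- intros n Hn x Hx. destruct (A_univ_div_rem n x Hn Hx) as (w & s & Hw & Hs & Hxw).
  exists w. split; [exact Hw | exact (nmul_bounds n w s x Hs Hxw)].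
Qed.

End Universe.
End Model.

Theorem lemma4p3 (B : structure) (HB : models_ThN B) (Hns : nonstandard B)
  (Delta : B) (HDelta : nonstandard_elt B Delta) :
  substructure_univ B (A_univ B Delta) /\ presburger_rel B (A_univ B Delta).
Proof. split; [apply A_univ_substructure | apply A_univ_presburger]; assumption. Qed.
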